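(* Let $a$ and $b$ be relatively prime integers with $1<a<b$, let $(u,v)$ be the definitely least solution of $ax+by=1$, and let $S=\langle a,b\rangle$. Then the number of indices $i\in\{1,\dots,a-1\}$ with $I_{i,a}(S)\neq\varnothing$ is $|v|$, i.e. $\#\{I_{i,a}(S): I_{i,a}(S)\neq\varnothing,\ i\in[1,a-1]\}=|v|$.
   Context: $\langle a,b\rangle=\{\lambda_1a+\lambda_2b:\lambda_1,\lambda_2\in\mathbb{N}\}$. $I(S)$ is the set of isolated gaps of $S$ ($x\in\mathbb{N}\setminus S$ with $x-1,x+1\in S$), and $I_{i,a}(S)=\{s\in I(S):s\equiv i\pmod a\}$. The definitely least solution $(u,v)$ of $ax+by=1$ is the unique integer solution with $|u|,|v|$ minimal; equivalently the one with $|u|\le b/2$, $|v|\le a/2$. *)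

From mathcomp Require Import all_boot all_order all_algebra.
From mathcomp Require Import boolp.
Set Implicit Arguments. Unset Strict Implicit. Unset Printing Implicit Defensive.

Definition inS (a b x : nat) : Prop := exists l1 l2 : nat, x = l1 * a + l2 * b.

(* x is an isolated gap of S = <a,b>: x \in N \ S with x-1, x+1 \in S.
   (x - 1 in S forces x >= 1 since we require x-1 to be a natural number.) *)
Definition isolated_gap (a b x : nat) : Prop :=
  [/\ 0 < x, ~ inS a b x, inS a b x.-1 & inS a b x.+1].

Definition Iia_nonempty (a b i : nat) : Prop :=
  exists x, isolated_gap a b x /\ x %% a = i %% a.

(* Let w < a be the inverse of b modulo a and put bcoef x := x w mod a, so that
   b * bcoef x is the least element of S congruent to x modulo a.  Hence x is in S
   iff b * bcoef x <= x, and the class of i contains an isolated gap (necessarily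
   b * bcoef i - a) iff bcoef i is a strict local maximum of bcoef (i - 1),
   bcoef i, bcoef (i + 1).  Since bcoef (i + 1) = bcoef i + w mod a, this happens
   iff bcoef i >= max(w, a - w); as bcoef permutes the residues, exactly
   min(w, a - w) classes qualify, and the definitely least solution of the Bezout
   equation gives min(w, a - w) = |v|. *)

From mathcomp Require Import all_boot all_order all_algebra.
From mathcomp Require Import boolp.
From mathcomp Require Import zify.
Import GRing.Theory Num.Theory.

Lemma eqn_modS d m n : (m.+1 == n.+1 %[mod d]) = (m == n %[mod d]).
Proof. by rewrite -[m.+1]addn1 -[n.+1]addn1 eqn_modDr. Qed.

Lemma ltn_congr_mod {d m n} : m < n -> m = n %[mod d] -> m + d <= n.
Proof.
move=> lt_mn /esym/eqP; rewrite eqn_mod_dvd ?(ltnW lt_mn) // => /dvdn_leq.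
by rewrite subn_gt0 lt_mn => /(_ isT); lia.
Qed.

Lemma card_ord_geq (n c : nat) : c <= n -> #|[set i : 'I_n | n - c <= i]| = c.
Proof.
move=> le_cn; rewrite -sum1dep_card.
have := @big_geq_mkord _ 0 addn (n - c) n predT (fun=> 1).
by rewrite sum_nat_const_nat => <-; lia.
Qed.

Lemma modn_ltn_double d s : s < d + d -> s %% d = if s < d then s else s - d.
Proof.
case: (ltnP s d) => [lt_sd _|le_ds lt_s2d]; first by rewrite modn_small.
by rewrite -[in LHS](subnK le_ds) modnDr modn_small //; lia.
Qed.

Lemma modnD_peak d w z (y := (z + w) %% d) :
  0 < w < d -> z < d -> (z < y) && ((y + w) %% d < y) = (maxn w (d - w) <= y).
Proof.
move=> w_bd lt_zd; rewrite /y (@modn_ltn_double d (z + w)); last by lia.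
by case: ifP => ?; rewrite modn_ltn_double; first case: ifP => ?; lia.
Qed.

Section AperyCoefficient.

Variables a b w : nat.
Hypotheses (a_gt1 : 1 < a) (lt_ab : a < b) (lt_wa : w < a) (bw1 : b * w = 1 %[mod a]).

Let w_gt0 : 0 < w.
Proof. by case: w bw1 => //; rewrite muln0 mod0n modn_small. Qed.

Let bcoef x := (x * w) %% a.

Lemma bcoef_mod x y : x = y %[mod a] -> bcoef x = bcoef y.
Proof. by move=> exy; rewrite /bcoef -modnMml exy modnMml. Qed.

Lemma bcoefK x : b * bcoef x = x %[mod a].
Proof. by rewrite /bcoef modnMmr mulnCA -modnMmr bw1 modnMmr muln1. Qed.

Lemma bcoefS x : bcoef x.+1 = (bcoef x + w) %% a.
Proof. by rewrite /bcoef mulSnr modnDml. Qed.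

Lemma inS_bcoef x : inS a b x <-> b * bcoef x <= x.
Proof.
split=> [[l1 [l2 ->]]|le_x].
  have -> : bcoef (l1 * a + l2 * b) = l2 %% a.
    rewrite (@bcoef_mod _ (l2 * b) (modnMDl _ _ _)) /bcoef.
    by rewrite -mulnA -modnMmr bw1 modnMmr muln1.
  by have := leq_mod l2 a; nia.
have dvd_x : a %| x - b * bcoef x by rewrite -eqn_mod_dvd // bcoefK.
by exists ((x - b * bcoef x) %/ a), (bcoef x); rewrite divnK //; lia.
Qed.

Lemma Iia_nonemptyP i :
  Iia_nonempty a b i.+1 <-> bcoef i < bcoef i.+1 /\ bcoef i.+2 < bcoef i.+1.
Proof.
have b_gt0 : 0 < b by lia.
have neighbours x : x.+1 = i.+1 %[mod a] ->
    [/\ bcoef x = bcoef i, bcoef x.+1 = bcoef i.+1 & bcoef x.+2 = bcoef i.+2].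
  move=> /eqP cls; split; apply: bcoef_mod; apply/eqP; by rewrite ?eqn_modS // -eqn_modS.
split=> [[[|x] [[//= _ gap_x /inS_bcoef S_pred /inS_bcoef S_succ] cls]]|].
  have [e0 e1 e2] := neighbours x cls.
  have lt_x : x.+1 < b * bcoef x.+1 by rewrite ltnNge; apply/negP => /inS_bcoef /gap_x.
  have := ltn_congr_mod lt_x (esym (bcoefK _)).
  move: S_pred S_succ; rewrite e0 e1 e2 => S_pred S_succ gap_ub.
  by split; rewrite -(ltn_pmul2l b_gt0); lia.
move=> [lt_pred lt_succ].
have le_b : b <= b * bcoef i.+1 by rewrite leq_pmulr // (leq_ltn_trans _ lt_pred).
pose x := b * bcoef i.+1 - a.+1.
have cls : x.+1 = i.+1 %[mod a].
  by rewrite -[LHS]modnDr (_ : x.+1 + a = b * bcoef i.+1) ?bcoefK // /x; lia.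
have [e0 e1 e2] := neighbours x cls.
exists x.+1; split=> //; split=> //.
- by move/inS_bcoef; rewrite e1 /x; lia.
- apply/inS_bcoef; rewrite e0 /x /=.
  by have := leq_mul (leqnn b) lt_pred; lia.
- apply/inS_bcoef; rewrite e2 /x.
  by have := leq_mul (leqnn b) lt_succ; lia.
Qed.

Lemma Iia_nonempty_bcoef i : Iia_nonempty a b i.+1 <-> maxn w (a - w) <= bcoef i.+1.
Proof.
rewrite Iia_nonemptyP [bcoef i.+2]bcoefS bcoefS.
by rewrite -modnD_peak ?w_gt0 ?lt_wa ?(ltn_pmod _ (ltnW a_gt1)) //; apply: rwP andP.
Qed.

Lemma card_Iia_nonempty :
  #|[set i : 'I_a | (0 < i) && `[< Iia_nonempty a b i >]]| = minn w (a - w).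
Proof.
have a_gt0 : 0 < a by lia.
pose g (i : 'I_a) : 'I_a := Ordinal (ltn_pmod (i * w) a_gt0).
have g_inj : injective g.
  move=> i j /(congr1 val) /= eq_ij; apply: val_inj => /=.
  rewrite -(modn_small (ltn_ord i)) -(modn_small (ltn_ord j)) -bcoefK -[j %% a]bcoefK.
  by rewrite /bcoef eq_ij.
rewrite -(@card_ord_geq a (minn w (a - w))); last by lia.
rewrite -[in RHS](card_preimset _ g_inj).
apply: eq_card => -[[|i] lt_ia]; rewrite !inE /=; first by rewrite mul0n mod0n; lia.
by rewrite (asbool_equiv_eqP idP (Iia_nonempty_bcoef i)) /bcoef; congr (_ <= _); lia.
Qed.

End AperyCoefficient.

Lemma bezout_inverse_mod {a b : nat} {u v : int} :
  1 < a -> (a%:Z * u + b%:Z * v = 1)%R -> (2 * `|v| <= a)%N ->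
  exists w, [/\ w < a, b * w = 1 %[mod a] & minn w (a - w) = `|v|%N].
Proof.
move=> a_gt1 bez le_v; case: (ltrgtP v 0%R) => [v_lt0|v_gt0|v0].
- have u_ge0 : (0 <= u)%R.
    case: (lerP 0 u) => // u_lt0.
    by have: (u <= -1)%R by []; have: (v <= -1)%R by []; nia.
  have e : a * `|u|%N = b * `|v|%N + 1 by nia.
  exists (a - `|v|%N); split; [lia| |lia].
  by rewrite -(modnMDl `|u|%N) (_ : _ + _ = b * a + 1) ?modnMDl //; nia.
- have u_le0 : (u <= 0)%R.
    case: (lerP u 0) => // u_gt0.
    by have: (1 <= u)%R by []; have: (1 <= v)%R by []; nia.
  have e : b * `|v|%N = a * `|u|%N + 1 by nia.
  exists `|v|%N; split; [lia| |lia].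
  by rewrite e mulnC modnMDl.
- move/(congr1 absz)/eqP: bez; rewrite v0 mulr0 addr0 abszM absz_nat muln_eq1.
  by case/andP=> /eqP; lia.
Qed.

(* Coprimality and the bound on |u| are implied by the other hypotheses. *)
Theorem proposition3p9 (a b : nat) (u v : int) :
  coprime a b -> 1 < a -> a < b ->
  (a%:Z * u + b%:Z * v = 1)%R ->
  (2 * `|u| <= b)%N -> (2 * `|v| <= a)%N ->
  #|[set i : 'I_a | (0 < i)%N && `[< Iia_nonempty a b i >]]| = `|v|%N.
Proof.
move=> _ a_gt1 lt_ab bez _ le_v.
have [w [lt_wa bw1 <-]] := bezout_inverse_mod a_gt1 bez le_v.
exact: card_Iia_nonempty.
Qed.
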